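(* Let $n\ge 2$ and let $k$ be an odd integer with $1\le k\le n$. Then $$c(n,n-k)=a(n,k)+a(n,k-1).$$
   Context: $c(n,j)$ is the unsigned Stirling number of the first kind (number of permutations of $\{1,\dots,n\}$ with exactly $j$ cycles; $c(n,j)=0$ for $j\le 0$ when $n\ge 1$). $A_n$ is the alternating group on $\{1,\dots,n\}$, $T(A_n)=\{(1\,2)(i\,j)\mid 1\le i<j\le n\}$, $\ell_{T(A_n)}(v)=\min\{r\ge 0\mid v=t_1\cdots t_r,\ t_i\in T(A_n)\}$, and $a(n,m)$ is the number of $v\in A_n$ with $\ell_{T(A_n)}(v)=m$. *)

From mathcomp Require Import all_boot all_fingroup all_solvable.
Set Implicit Arguments. Unset Strict Implicit. Unset Printing Implicit Defensive.
Local Open Scope group_scope.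

(* Points 1..n are modelled by 'I_n = {0,...,n-1}: paper's point p is ordinal p-1. *)

Definition stirling1 (n j : nat) : nat :=
  #|[set s : 'S_n | #|porbits s| == j]|.

Definition TAn (n : nat) : {set 'S_n} :=
  [set s : 'S_n | [exists a : 'I_n, exists b : 'I_n, exists i : 'I_n, exists j : 'I_n,
     [&& val a == 0%N, val b == 1%N, (i < j)%N & s == tperm a b * tperm i j]]].

Definition prodT (n r : nat) (v : 'S_n) : bool :=
  [exists t : r.-tuple 'S_n, all (mem (TAn n)) t && (\prod_(x <- t) x == v)].

Definition lenT_is (n m : nat) (v : 'S_n) : bool :=
  prodT m v && [forall r : 'I_m, ~~ prodT (val r) v].

Definition aT (n m : nat) : nat :=
  #|[set v : 'S_n | (v \in 'Alt_('I_n)) && lenT_is m v]|.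

From mathcomp Require Import all_boot all_fingroup all_solvable.
From mathcomp Require Import zify.
Set Implicit Arguments. Unset Strict Implicit. Unset Printing Implicit Defensive.
Local Open Scope group_scope.

(* Write t := (1 2) and c(v) for the number of cycles of v.  A generator
   t (i j) of T(A_n) multiplies both v and t v on the left by a single
   transposition (up to conjugation by t), so c(v) + c(t v) drops by at most 2
   per generator, and it equals 2n - 1 at the identity.  Conversely an even v
   is, by pairing consecutive transpositions with copies of t, a product of
   n - max (c(v), c(t v)) generators.  Hence l_T(v) = (2n - 1 - c(v) - c(t v))/2
   for even v.  Since c(v) and c(t v) differ by one, the permutations t v with
   n - k cycles, k odd, are exactly those with v even of length k or k - 1. *)

Section CycleCount.

Variable T : finType.
Implicit Types (s : {perm T}) (x y : T).

Lemma card_porbits_le s : #|porbits s| <= #|T|.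
Proof. exact: leq_imset_card. Qed.

Lemma card_porbits1 : #|porbits (1 : {perm T})| = #|T|.
Proof.
rewrite card_imset // => x y /eqP; rewrite eq_porbit_mem.
by rewrite porbit.unlock cycle1 imset_set1 /aperm perm1 inE => /eqP.
Qed.

Lemma odd_perm_card_porbits s : odd_perm s = odd (#|T| - #|porbits s|).
Proof. by rewrite oddB ?card_porbits_le. Qed.

Lemma card_porbits_mul_tperm_in x y s : x != y -> x \in porbit s y ->
  #|porbits (tperm x y * s)| = #|porbits s|.+1.
Proof. by move=> nxy xs; have := porbits_mul_tperm s x y; rewrite nxy xs /=; lia. Qed.

Lemma card_porbits_mul_tperm_notin x y s : x != y -> x \notin porbit s y ->
  #|porbits (tperm x y * s)|.+1 = #|porbits s|.
Proof. by move=> nxy xs; have := porbits_mul_tperm s x y; rewrite nxy xs /=; lia. Qed.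

Lemma card_porbits_mul_tperm_neq x y s : x != y ->
  #|porbits (tperm x y * s)| = #|porbits s|.+1 \/ #|porbits (tperm x y * s)|.+1 = #|porbits s|.
Proof.
move=> nxy; have [xs | xs] := boolP (x \in porbit s y).
  by left; rewrite card_porbits_mul_tperm_in.
by right; rewrite card_porbits_mul_tperm_notin.
Qed.

Lemma card_porbits_mul_tperm_ge x y s :
  #|porbits s| <= #|porbits (tperm x y * s)| + 1.
Proof.
have [-> | nxy] := eqVneq x y; first by rewrite tperm1 mul1g addn1.
by case: (card_porbits_mul_tperm_neq s nxy); lia.
Qed.

Lemma prod_tperm_card_porbits s : exists2 ts : seq (T * T),
  all dpair ts & size ts + #|porbits s| = #|T| /\ s = \prod_(t <- ts) tperm t.1 t.2.
Proof.
have [m] := ubnP (#|T| - #|porbits s|); elim: m s => // m IHm s le_s_m.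
case: (pickP (fun x => s x != x)) => [x sx | s_id]; last first.
  have -> : s = 1 by apply/permP => x; apply/eqP/idPn; rewrite perm1 s_id.
  by exists [::]; rewrite ?big_nil ?card_porbits1.
have nxsx : x != s x by rewrite eq_sym.
have x_in : x \in porbit s (s x) by rewrite -(expg1 s) porbit_perm porbit_id.
have card_ts := card_porbits_mul_tperm_in nxsx x_in.
have le_card := card_porbits_le (tperm x (s x) * s).
have [|ts dts [size_ts def_ts]] := IHm (tperm x (s x) * s); first by lia.
exists ((x, s x) :: ts); first by rewrite /= nxsx.
by split; [rewrite /= -size_ts card_ts addSn addnS | rewrite big_cons -def_ts tpermKg].
Qed.

End CycleCount.

Lemma lenT_is_uniq n m m' (v : 'S_n) : lenT_is m v -> lenT_is m' v -> m = m'.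
Proof.
case/andP=> Pm /forallP minm /andP[Pm' /forallP minm'].
case: (ltngtP m m') => // [lt | gt].
  by have := minm' (Ordinal lt); rewrite Pm.
by have := minm (Ordinal gt); rewrite Pm'.
Qed.

Lemma lenT_isE n r (v : 'S_n) :
  prodT r v -> (forall r', prodT r' v -> r <= r') -> forall m, lenT_is m v = (m == r).
Proof.
move=> Pr minr m; apply/idP/eqP => [/andP[Pm /forallP minm] | ->].
  apply/eqP; rewrite eqn_leq (minr _ Pm) andbT leqNgt; apply/negP => lt_rm.
  by have := minm (Ordinal lt_rm); rewrite Pr.
rewrite /lenT_is Pr; apply/forallP => r'; apply/negP => /minr.
by rewrite leqNgt ltn_ord.
Qed.

Lemma prodTP n r (v : 'S_n) : reflect
  (exists2 s : seq 'S_n, all (mem (TAn n)) s & size s = r /\ \prod_(g <- s) g = v)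
  (prodT r v).
Proof.
apply: (iffP existsP) => [[t /andP[gen_t /eqP def_v]] | [s gen_s [size_s def_v]]].
  by exists t; rewrite ?size_tuple.
have size_s' : size s == r by rewrite size_s.
by exists (Tuple size_s'); rewrite /= gen_s def_v eqxx.
Qed.

Section Generators.

Variable n : nat.
Local Notation N := n.+2.
Implicit Types (v : 'S_N) (i j : 'I_N).

Definition t12 : 'S_N := tperm ord0 (lift ord0 ord0).

Lemma t12_neq : ord0 != lift ord0 ord0 :> 'I_N.
Proof. exact: neq_lift. Qed.

Lemma t12_mulK v : t12 * (t12 * v) = v.
Proof. by rewrite mulgA tperm2 mul1g. Qed.

Lemma t12_mul_tperm_in_TAn i j : i != j -> t12 * tperm i j \in TAn N.
Proof.
move=> nij; rewrite inE; apply/existsP; exists ord0; apply/existsP.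
exists (lift ord0 ord0); case: (ltngtP i j) => [lt | gt | eq].
- by apply/existsP; exists i; apply/existsP; exists j; rewrite lt !eqxx.
- by apply/existsP; exists j; apply/existsP; exists i; rewrite gt tpermC !eqxx.
- by rewrite (val_inj eq) eqxx in nij.
Qed.

Lemma tperm_mul_t12_in_TAn i j : i != j -> tperm i j * t12 \in TAn N.
Proof.
move=> nij; have -> : tperm i j * t12 = t12 * tperm (t12 i) (t12 j).
  by rewrite -tpermJ conjgE tpermV t12_mulK.
by apply: t12_mul_tperm_in_TAn; rewrite (inj_eq perm_inj).
Qed.

Lemma TAnP g : g \in TAn N -> exists i j, g = t12 * tperm i j.
Proof.
rewrite inE => /existsP[a /existsP[b /existsP[i /existsP[j]]]].
case/and4P=> /eqP a0 /eqP b1 _ /eqP ->; exists i, j.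
by rewrite /t12; congr (tperm _ _ * _); apply: val_inj.
Qed.

Definition cycles_t12 v := #|porbits v| + #|porbits (t12 * v)|.

Lemma cycles_t12_1 : ((cycles_t12 1).+1 = 2 * N)%N.
Proof.
have one_notin : ord0 \notin porbit (1 : 'S_N) (lift ord0 ord0).
  by rewrite porbit.unlock cycle1 imset_set1 inE /aperm perm1 t12_neq.
have := card_porbits_mul_tperm_notin t12_neq one_notin.
by rewrite /cycles_t12 mulg1 card_porbits1 card_ord -addnS => ->; rewrite addnn mul2n.
Qed.

(* With g = t (i j), g v = (t i t j) (t v) and t (g v) = (i j) v. *)
Lemma cycles_t12_mul_gen g v : g \in TAn N -> cycles_t12 v <= cycles_t12 (g * v) + 2.
Proof.
case/TAnP=> i [j ->]; rewrite /cycles_t12 -mulgA t12_mulK.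
have -> : t12 * (tperm i j * v) = tperm (t12 i) (t12 j) * (t12 * v).
  by rewrite -tpermJ conjgE tpermV -!mulgA t12_mulK.
have le_v := card_porbits_mul_tperm_ge i j v.
have le_t12v := card_porbits_mul_tperm_ge (t12 i) (t12 j) (t12 * v).
apply: leq_trans (leq_add le_v le_t12v) _.
by rewrite addnACA [X in X + _ <= _]addnC.
Qed.

Lemma prodT_cycles_t12 r v : prodT r v -> (2 * N <= 2 * r + 1 + cycles_t12 v)%N.
Proof.
case/prodTP=> s gen_s [<- <-] {r v}; elim: s gen_s => [|g s IHs] /=.
  by rewrite big_nil -cycles_t12_1; lia.
case/andP=> gen_g /IHs; rewrite big_cons; set w := \prod_(h <- s) h.
have := cycles_t12_mul_gen w gen_g; set c := cycles_t12 (g * w); lia.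
Qed.

(* Consecutive transpositions are grouped as (a b) t . t (c d). *)
Lemma prodT_prod_tperm (ts : seq ('I_N * 'I_N)) : all dpair ts ->
  prodT (size ts) (t12 ^+ odd (size ts) * \prod_(t <- ts) tperm t.1 t.2).
Proof.
elim: ts => [_ | t ts IHts /andP[dt /IHts/prodTP[s gen_s [size_s def_s]]]].
  by apply/prodTP; exists [::]; rewrite /= ?big_nil ?expg0 ?mulg1.
rewrite /= big_cons; apply/prodTP; case: (odd (size ts)) def_s => /= def_s.
  exists (tperm t.1 t.2 * t12 :: s); rewrite /= ?tperm_mul_t12_in_TAn ?size_s //.
  by rewrite big_cons def_s expg1 -mulgA t12_mulK ?expg0 mul1g.
exists (t12 * tperm t.1 t.2 :: s); rewrite /= ?t12_mul_tperm_in_TAn ?size_s //.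
by rewrite big_cons def_s ?expg0 mul1g expg1 mulgA.
Qed.

Lemma prodT_even v : ~~ odd_perm v ->
  exists2 r, prodT r v & (2 * N = 2 * r + 1 + cycles_t12 v)%N.
Proof.
move=> ev; have odd_t12v : odd_perm (t12 * v) by rewrite odd_mul_tperm t12_neq.
have [v_t12 | v_t12] := boolP (ord0 \in porbit v (lift ord0 ord0)).
- have card_t12v := card_porbits_mul_tperm_in t12_neq v_t12.
  have [ts dts [size_ts def_ts]] := prod_tperm_card_porbits (t12 * v).
  have odd_ts : odd (size ts) by rewrite -odd_perm_prod // -def_ts.
  exists (size ts).
    by have := prodT_prod_tperm dts; rewrite odd_ts -def_ts t12_mulK.
  rewrite card_ord card_t12v in size_ts; rewrite /cycles_t12 card_t12v.
  by move: size_ts; set c := #|porbits v|; lia.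
- have card_t12v := card_porbits_mul_tperm_notin t12_neq v_t12.
  have [ts dts [size_ts def_ts]] := prod_tperm_card_porbits v.
  have even_ts : ~~ odd (size ts) by rewrite -odd_perm_prod // -def_ts.
  exists (size ts).
    by have := prodT_prod_tperm dts; rewrite (negbTE even_ts) -def_ts mul1g.
  rewrite card_ord in size_ts; rewrite /cycles_t12 -card_t12v in size_ts *.
  by move: size_ts; set c := #|porbits (t12 * v)|; lia.
Qed.

Lemma lenT_is_even v m : ~~ odd_perm v ->
  lenT_is m v = (2 * N == 2 * m + 1 + cycles_t12 v)%N.
Proof.
case/prodT_even=> r Pr def_r.
rewrite (lenT_isE Pr) => [|r' /prodT_cycles_t12]; lia.
Qed.

End Generators.

Arguments t12 {n}.
Arguments t12_neq {n}.

Lemma odd_length_arith N k c e : odd k -> k <= N -> c <= N -> ~~ odd (N - c) ->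
  e = c.+1 \/ e.+1 = c ->
  (e == N - k) = (2 * N == 2 * k + 1 + (c + e))%N || (2 * N == 2 * k.-1 + 1 + (c + e))%N.
Proof.
move=> odd_k le_kN le_cN even_Nc ce.
have def_k := odd_double_half k; have def_Nc := odd_double_half (N - c).
rewrite odd_k (negbTE even_Nc) -!addnn in def_k def_Nc; lia.
Qed.

Lemma card_porbits_t12_mul n k (v : 'S_n.+2) : odd k -> k <= n.+2 ->
  (#|porbits (t12 * v)| == n.+2 - k) =
  (v \in 'Alt_('I_n.+2)) && (lenT_is k v || lenT_is k.-1 v).
Proof.
move=> odd_k le_kN; rewrite Alt_even.
have [odd_v | even_v] /= := boolP (odd_perm v).
  apply/negbTE/eqP => card_t12v.
  have := odd_mul_tperm ord0 (lift ord0 ord0) v; rewrite -/t12 odd_v t12_neq.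
  by rewrite odd_perm_card_porbits card_ord card_t12v subKn // odd_k.
rewrite !lenT_is_even // /cycles_t12; apply: odd_length_arith => //.
- by have := card_porbits_le v; rewrite card_ord.
- by move: even_v; rewrite odd_perm_card_porbits card_ord.
- exact: card_porbits_mul_tperm_neq v t12_neq.
Qed.

Theorem claim7p1 (n k : nat) :
  2 <= n -> odd k -> 1 <= k <= n ->
  stirling1 n (n - k) = aT n k + aT n k.-1.
Proof.
case: n => [|[|n]] // _ odd_k /andP[k_gt0 le_kn].
rewrite /stirling1 /aT -cardsUI.
set A := [set v | _ && lenT_is k v]; set B := [set v | _ && lenT_is k.-1 v].
have -> : A :&: B = set0.
  apply/setP => v; rewrite !inE; apply/negbTE/andP => -[/andP[_ len_k] /andP[_ len_k1]].
  by have := lenT_is_uniq len_k len_k1; lia.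
rewrite cards0 addn0 -(card_preimset _ (mulgI t12)); apply: eq_card => v.
by rewrite [LHS]inE [LHS]inE card_porbits_t12_mul // andb_orr !inE.
Qed.
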